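(* Let $n\ge3$, $k\ge0$, let $S\subseteq\mathrm{Inc}(A,B)$ be an independent set in $G_n^k$, and let $i\in[n+k]$. Then (1) $\mathrm{DFCL}(i,S)$ is a subset of $\mathrm{Inc}(A,B)$ that is independent in $G_n^k$; (2) $\mathrm{DLCF}(i,S)$ is a subset of $\mathrm{Inc}(A,B)$ that is independent in $G_n^k$; (3) $|\mathrm{DFCL}(i,S)|+|\mathrm{DLCF}(i,S)|=2|S|$.
   Context: For integers $n\ge3$, $k\ge0$, the crown $S_n^k$ is the poset with ground set $A\cup B$, $A=\{a_1,\dots,a_{n+k}\}$, $B=\{b_1,\dots,b_{n+k}\}$, indices cyclic modulo $n+k$; elements of $A$ are pairwise incomparable, as are elements of $B$, and $a_i$ is incomparable to $b_j$ when $j\in\{i,\dots,i+k\}$ (mod $n+k$), while $a_i<b_j$ otherwise. $\mathrm{Inc}(A,B)$ is the set of pairs $(a,b)\in A\times B$ with $a$ incomparable to $b$; $G_n^k$ has vertex set $\mathrm{Inc}(A,B)$ with $(a,b)$ adjacent to $(x,y)$ iff $a<y$ and $x<b$. For an independent $S$ and $i\in[n+k]$, an ordered pair $((a,b),(x,y))$ of elements of $S$ is a contraction blocking pair at $i$ if $a=a_i$, $y=b_i$, and $x<b$ in $S_n^k$. $\mathrm{FCBP}(i,S)$ is the set of $(a,b)\in S$ for which some $(x,y)\in S$ makes $((a,b),(x,y))$ a contraction blocking pair at $i$; $\mathrm{LCBP}(i,S)$ is the set of $(x,y)\in S$ for which some $(a,b)\in S$ makes $((a,b),(x,y))$ a contraction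 blocking pair at $i$. Define $\mathrm{DFCL}(i,S)=(S-\mathrm{FCBP}(i,S))\cup\{(x,b_{i-1}):(x,y)\in\mathrm{LCBP}(i,S)\}$ and $\mathrm{DLCF}(i,S)=(S-\mathrm{LCBP}(i,S))\cup\{(a_{i+1},b):(a,b)\in\mathrm{FCBP}(i,S)\}$. *)

From mathcomp Require Import all_boot.
Set Implicit Arguments. Unset Strict Implicit. Unset Printing Implicit Defensive.

(* Crown S_n^k with N := n + k.  Indices are 0-based ordinals 'I_N (cyclic).
   The element a_i is encoded by index i of A, b_j by index j of B.
   A pair (a_i, b_j) in A x B is encoded as (i, j) : 'I_N * 'I_N. *)

(* a_i is incomparable to b_j  iff  j in {i, ..., i+k} (mod N),
   i.e. (j - i) mod N <= k. *)
Definition crown_inc (N k : nat) (i j : 'I_N) : bool :=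
  ((j + N - i) %% N <= k)%N.

Definition crown_lt (N k : nat) (i j : 'I_N) : bool := ~~ crown_inc k i j.

Definition IncAB (N k : nat) : {set 'I_N * 'I_N} :=
  [set v | crown_inc k v.1 v.2].

Definition Gadj (N k : nat) (u v : 'I_N * 'I_N) : bool :=
  crown_lt k u.1 v.2 && crown_lt k v.1 u.2.

Definition indep (N k : nat) (S : {set 'I_N * 'I_N}) : bool :=
  (S \subset IncAB N k) && [forall u in S, forall v in S, ~~ Gadj k u v].

Definition cbp (N k : nat) (i : 'I_N) (u v : 'I_N * 'I_N) : bool :=
  [&& u.1 == i, v.2 == i & crown_lt k v.1 u.2].

Definition FCBP (N k : nat) (i : 'I_N) (S : {set 'I_N * 'I_N}) :=
  [set u in S | [exists v in S, cbp k i u v]].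

Definition LCBP (N k : nat) (i : 'I_N) (S : {set 'I_N * 'I_N}) :=
  [set v in S | [exists u in S, cbp k i u v]].

Definition DFCL (N k : nat) (i : 'I_N) (S : {set 'I_N * 'I_N}) :=
  (S :\: FCBP k i S) :|: [set (v.1, ord_pred i) | v in LCBP k i S].

Definition DLCF (N k : nat) (i : 'I_N) (S : {set 'I_N * 'I_N}) :=
  (S :\: LCBP k i S) :|: [set (ordS i, u.2) | u in FCBP k i S].

From mathcomp Require Import all_boot zify.
Set Implicit Arguments. Unset Strict Implicit. Unset Printing Implicit Defensive.

(* Reversing the cyclic order of the indices and exchanging A with B,
   (a_x, b_j) |-> (a_(-j), b_(-x)) (realised below with the reflection
   j |-> N-1-j of rev_ord), is an automorphism of G_n^k that exchanges the
   first and last members of contraction blocking pairs; it carries DLCF(i,S)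
   to DFCL at the reflected index of the reflected set, so only DFCL needs
   an argument.
   A last member (x, b_i) of a blocking pair has x <> a_i, hence (x, b_(i-1))
   is still in Inc(A,B), and two such moved pairs are never adjacent.  If a
   kept element s were adjacent to a moved pair (x, b_(i-1)), independence of
   S would force s = (a_i, b) with x < b, making s a deleted first member.
   Since a_i < b_(i-1) (here n >= 2 is used), a moved pair is adjacent to the
   first member of its blocking pair, so it was not in S.  Therefore
   |DFCL| = |S| - |FCBP| + |LCBP|, and dually |DLCF| = |S| - |LCBP| + |FCBP|. *)

Section CyclicGap.
Variable N : nat.

Definition crown_gap (x j : 'I_N) : nat := (j + N - x) %% N.

Lemma crown_gapE (x j : 'I_N) :
  crown_gap x j = if x <= j then j - x else j + N - x.
Proof.
have := ltn_ord x; have := ltn_ord j; rewrite /crown_gap; case: ifP => le_xj *.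
  by rewrite -addnBAC // modnDr modn_small //; lia.
by rewrite modn_small //; lia.
Qed.

Lemma ord_predE (i : 'I_N) : val (ord_pred i) = if i == 0 :> nat then N.-1 else i.-1.
Proof.
have := ltn_ord i; rewrite /=; case: eqP => [-> | i_neq0] lt_iN.
  by rewrite add0n modn_small //; lia.
by rewrite -subn1 -addnBAC; [rewrite modnDr modn_small|]; lia.
Qed.

Lemma ordSE (i : 'I_N) : val (ordS i) = if i.+1 == N then 0 else i.+1.
Proof.
rewrite /=; case: eqP => [-> | ?]; first by rewrite modnn.
by rewrite modn_small //; have := ltn_ord i; lia.
Qed.

Lemma crown_gap_pred (x i : 'I_N) :
  crown_gap x (ord_pred i) = if x == i then N.-1 else (crown_gap x i).-1.
Proof.
have := ltn_ord x; have := ltn_ord i.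
rewrite !crown_gapE ord_predE -val_eqE /=.
by case: eqP; case: eqP; do !case: ifP; lia.
Qed.

Lemma crown_gap_rev (x j : 'I_N) : crown_gap (rev_ord j) (rev_ord x) = crown_gap x j.
Proof. by rewrite /crown_gap /=; congr modn; have := ltn_ord x; have := ltn_ord j; lia. Qed.

Lemma rev_ordS (i : 'I_N) : rev_ord (ordS i) = ord_pred (rev_ord i).
Proof.
apply: val_inj; have := ordSE i; rewrite ord_predE /= => ->.
by have := ltn_ord i; case: eqP; case: eqP; lia.
Qed.

End CyclicGap.

Section Crown.
Variables N k : nat.

Lemma crown_incE (x j : 'I_N) : crown_inc k x j = (crown_gap x j <= k).
Proof. by []. Qed.

Lemma crown_inc_pred (x i : 'I_N) :
  crown_inc k x i -> x != i -> crown_inc k x (ord_pred i).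
Proof. by rewrite !crown_incE crown_gap_pred => + /negPf ->; apply: leq_trans (leq_pred _). Qed.

Lemma crown_lt_pred (i : 'I_N) : k.+2 <= N -> crown_lt k i (ord_pred i).
Proof. by rewrite /crown_lt crown_incE crown_gap_pred eqxx -ltnNge; lia. Qed.

Lemma crown_inc_rev (x j : 'I_N) : crown_inc k (rev_ord j) (rev_ord x) = crown_inc k x j.
Proof. by rewrite !crown_incE crown_gap_rev. Qed.

Lemma crown_lt_rev (x j : 'I_N) : crown_lt k (rev_ord j) (rev_ord x) = crown_lt k x j.
Proof. by rewrite /crown_lt crown_inc_rev. Qed.

Lemma GadjC (u v : 'I_N * 'I_N) : Gadj k u v = Gadj k v u.
Proof. exact: andbC. Qed.

Lemma indepP (S : {set 'I_N * 'I_N}) :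
  reflect ({in S, forall u, crown_inc k u.1 u.2} /\ {in S &, forall u v, ~~ Gadj k u v})
          (indep k S).
Proof.
apply: (iffP andP) => [[/subsetP sub_inc /forall_inP indep_S] | [inc_S nadj_S]]; split.
- by move=> u /sub_inc; rewrite inE.
- by move=> u v uS vS; move/forall_inP: (indep_S u uS); apply.
- by apply/subsetP => u uS; rewrite inE inc_S.
- by apply/forall_inP => u uS; apply/forall_inP => v vS; apply: nadj_S.
Qed.

Lemma FCBP_sub i (S : {set 'I_N * 'I_N}) : FCBP k i S \subset S.
Proof. by apply/subsetP => u; rewrite inE => /andP[]. Qed.

Lemma LCBP_sub i (S : {set 'I_N * 'I_N}) : LCBP k i S \subset S.
Proof. by apply/subsetP => u; rewrite inE => /andP[]. Qed.

Definition crown_flip (u : 'I_N * 'I_N) : 'I_N * 'I_N := (rev_ord u.2, rev_ord u.1).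

Lemma crown_flipK : involutive crown_flip.
Proof. by case=> x j; rewrite /crown_flip /= !rev_ordK. Qed.

Lemma crown_flip_inj : injective crown_flip.
Proof. exact: inv_inj crown_flipK. Qed.

Lemma Gadj_flip (u v : 'I_N * 'I_N) : Gadj k (crown_flip u) (crown_flip v) = Gadj k u v.
Proof. by rewrite /Gadj /= !crown_lt_rev andbC. Qed.

Lemma cbp_flip i (u v : 'I_N * 'I_N) :
  cbp k (rev_ord i) (crown_flip v) (crown_flip u) = cbp k i u v.
Proof. by rewrite /cbp /= !(inj_eq rev_ord_inj) crown_lt_rev andbCA. Qed.

Lemma indep_flip (S : {set 'I_N * 'I_N}) : indep k S -> indep k (crown_flip @^-1: S).
Proof.
case/indepP => inc_S nadj_S; apply/indepP; split => [u | u v]; rewrite !inE.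
  by move/inc_S; rewrite crown_inc_rev.
by move=> uS vS; rewrite -Gadj_flip; apply: nadj_S.
Qed.

Lemma FCBP_flip i (S : {set 'I_N * 'I_N}) :
  FCBP k (rev_ord i) (crown_flip @^-1: S) = crown_flip @^-1: LCBP k i S.
Proof.
apply/setP => w; rewrite !inE; congr andb.
apply/exists_inP/exists_inP => [[v /[!inE] vS cbp_wv] | [u uS cbp_uw]].
  by exists (crown_flip v); rewrite // -cbp_flip !crown_flipK.
by exists (crown_flip u); rewrite ?inE ?crown_flipK // -[w]crown_flipK cbp_flip.
Qed.

Lemma preimset_flipK (A : {set 'I_N * 'I_N}) : crown_flip @^-1: (crown_flip @^-1: A) = A.
Proof. by apply/setP => w; rewrite !inE crown_flipK. Qed.

Lemma LCBP_flip i (S : {set 'I_N * 'I_N}) :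
  LCBP k (rev_ord i) (crown_flip @^-1: S) = crown_flip @^-1: FCBP k i S.
Proof.
have := FCBP_flip (rev_ord i) (crown_flip @^-1: S).
by rewrite rev_ordK preimset_flipK => ->; rewrite preimset_flipK.
Qed.

Lemma DLCF_flip i (S : {set 'I_N * 'I_N}) :
  DLCF k i S = crown_flip @^-1: DFCL k (rev_ord i) (crown_flip @^-1: S).
Proof.
apply/setP => w; rewrite /DLCF /DFCL FCBP_flip LCBP_flip !inE crown_flipK; congr orb.
apply/imsetP/imsetP => [[u uF ->] | [v vF flip_w]].
  exists (crown_flip u); first by rewrite inE crown_flipK.
  by rewrite /crown_flip; congr pair; apply: rev_ordS.
exists (crown_flip v); first by move: vF; rewrite inE.
rewrite -[w]crown_flipK flip_w /crown_flip; congr pair.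
by rewrite -rev_ordS rev_ordK.
Qed.

End Crown.

Section DeleteFirst.
Variables (N k : nat) (hk : k.+2 <= N).
Variables (S : {set 'I_N * 'I_N}) (hS : indep k S) (i : 'I_N).

Lemma LCBP_snd v : v \in LCBP k i S -> v.2 = i.
Proof. by rewrite inE => /andP[_ /exists_inP[u _ /and3P[_ /eqP]]]. Qed.

Lemma LCBP_inc_pred v : v \in LCBP k i S -> crown_inc k v.1 (ord_pred i).
Proof.
case/indepP: hS => inc_S _ vL; have := vL.
rewrite inE => /andP[vS /exists_inP[u uS /and3P[/eqP u1 _ lt_vu]]].
apply: crown_inc_pred; first by rewrite -(LCBP_snd vL) inc_S.
by apply: contraTneq lt_vu => v1; rewrite /crown_lt negbK v1 -u1 inc_S.
Qed.

Lemma LCBP_pred_notin v : v \in LCBP k i S -> (v.1, ord_pred i) \notin S.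
Proof.
case/indepP: hS => _ nadj_S.
rewrite inE => /andP[_ /exists_inP[u uS /and3P[/eqP u1 _ lt_vu]]].
apply/negP => wS; have := nadj_S _ _ wS uS.
by rewrite /Gadj /= lt_vu u1 crown_lt_pred.
Qed.

Lemma nadj_LCBP_pred s v : s \in S -> s \notin FCBP k i S -> v \in LCBP k i S ->
  ~~ Gadj k s (v.1, ord_pred i).
Proof.
case/indepP: hS => _ nadj_S sS sF vL.
have v2 := LCBP_snd vL; have vS := subsetP (LCBP_sub k i S) _ vL.
apply: contra sF; rewrite /Gadj /= => /andP[lt_s_pi lt_vs].
have inc_si : crown_inc k s.1 i by move: (nadj_S _ _ vS sS); rewrite /Gadj lt_vs v2 negbK.
have /eqP s1 : s.1 == i by apply: contraNT lt_s_pi => /(crown_inc_pred inc_si) ->.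
by rewrite inE sS; apply/exists_inP; exists v; rewrite // /cbp s1 v2 eqxx lt_vs.
Qed.

Lemma indep_DFCL : indep k (DFCL k i S).
Proof.
case/indepP: (hS) => inc_S nadj_S; apply/indepP; split => [w | w w'].
  rewrite in_setU in_setD => /orP[/andP[_ /inc_S] // | /imsetP[v vL ->]].
  exact: (LCBP_inc_pred vL).
rewrite !(in_setU, in_setD).
move=> /orP[/andP[wF wS] | /imsetP[v vL ->]] /orP[/andP[wF' wS'] | /imsetP[v' vL' ->]].
- exact: nadj_S.
- exact: nadj_LCBP_pred.
- by rewrite GadjC; apply: nadj_LCBP_pred.
- by rewrite /Gadj /= /crown_lt LCBP_inc_pred.
Qed.

Lemma card_DFCL : #|DFCL k i S| + #|FCBP k i S| = #|S| + #|LCBP k i S|.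
Proof.
have disj : (S :\: FCBP k i S) :&: [set (v.1, ord_pred i) | v in LCBP k i S] = set0.
  apply/setP => w; rewrite in_setI in_setD in_set0.
  apply/andP => -[/andP[_ wS] /imsetP[v vL w_eq]].
  by move: wS; rewrite w_eq (negbTE (LCBP_pred_notin vL)).
have inj : {in LCBP k i S &, injective (fun v => (v.1, ord_pred i))}.
  by move=> [x j] [x' j'] /LCBP_snd /= -> /LCBP_snd /= -> [->].
have := cardsUI (S :\: FCBP k i S) [set (v.1, ord_pred i) | v in LCBP k i S].
rewrite disj cards0 addn0 card_in_imset // -/(DFCL k i S).
have := cardsID (FCBP k i S) S; rewrite (setIidPr (FCBP_sub k i S)).
by move=> <- ->; rewrite addnAC; congr (_ + _); apply: addnC.
Qed.

End DeleteFirst.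

Section DeleteLast.
Variables (N k : nat) (hk : k.+2 <= N).
Variables (S : {set 'I_N * 'I_N}) (hS : indep k S) (i : 'I_N).

Lemma indep_DLCF : indep k (DLCF k i S).
Proof. by rewrite DLCF_flip; apply/indep_flip/indep_DFCL/indep_flip. Qed.

Lemma card_DLCF : #|DLCF k i S| + #|LCBP k i S| = #|S| + #|FCBP k i S|.
Proof.
have := card_DFCL hk (indep_flip hS) (rev_ord i).
by rewrite DLCF_flip FCBP_flip LCBP_flip !(card_preimset _ (@crown_flip_inj N)).
Qed.

End DeleteLast.

Theorem lemma4p7 (n k : nat) (hn : (3 <= n)%N)
  (S : {set 'I_(n + k) * 'I_(n + k)}) (hS : indep k S) (i : 'I_(n + k)) :
  indep k (DFCL k i S) /\ indep k (DLCF k i S) /\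
  (#|DFCL k i S| + #|DLCF k i S| = 2 * #|S|)%N.
Proof.
have hk : (k.+2 <= n + k)%N by lia.
split; first exact: indep_DFCL.
split; first exact: indep_DLCF.
by have := card_DFCL hk hS i; have := card_DLCF hk hS i; lia.
Qed.
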